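(* Let $h(x)=\max\{s_+x,0\}+\min\{s_-x,0\}$ with $s_+>0$, $s_-\ge0$, $s_+\ne s_-$, applied entrywise, and consider $$\ell\big((W_j,b_j)_{j=1}^2\big)=\tfrac12\big\|W_2\,h(W_1X+b_1\mathbf{1}_3^T)+b_2\mathbf{1}_3^T-Y\big\|_F^2,$$ with $W_1\in\mathbb{R}^{2\times 2}$, $b_1\in\mathbb{R}^2$, $W_2\in\mathbb{R}^{1\times 2}$, $b_2\in\mathbb{R}$, and $X=\begin{bmatrix}1&0&\tfrac12\\0&1&\tfrac12\end{bmatrix}$, $Y=\begin{bmatrix}0&0&1\end{bmatrix}$. Then there is a tuple of parameters with $b_1=0$, $b_2=0$ at which $\ell=0$, and there is a tuple $(\hat W_j,\hat b_j)_{j=1}^2$ with $\hat b_1=0$, $\hat b_2=0$ at which the network output equals the linear least squares output $\begin{bmatrix}\tfrac13&\tfrac13&\tfrac13\end{bmatrix}$, $\ell=\tfrac13$, and which is a local minimum of $\ell$.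
   Context: $\mathbf{1}_3$ is the all-ones column vector in $\mathbb{R}^3$; $\|\cdot\|_F$ is the Frobenius norm. *)

From mathcomp Require Import all_boot all_order all_algebra.
From mathcomp Require Import reals.
Set Implicit Arguments. Unset Strict Implicit. Unset Printing Implicit Defensive.
Import Order.TTheory GRing.Theory Num.Theory.
Local Open Scope ring_scope.

Section Defs.
Variable R : realType.

Definition act (sp sm : R) (x : R) : R :=
  Num.max (sp * x) 0 + Num.min (sm * x) 0.

Definition Xdata : 'M[R]_(2, 3) :=
  \matrix_(i < 2, j < 3)
    (if j == 2%N :> nat then 2^-1 else if i == j :> nat then 1 else 0).
Definition Ydata : 'M[R]_(1, 3) :=
  \matrix_(i < 1, j < 3) (if j == 2%N :> nat then 1 else 0).

Definition net (sp sm : R) (W1 : 'M[R]_(2, 2)) (b1 : 'cV[R]_2)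
  (W2 : 'M[R]_(1, 2)) (b2 : R) : 'M[R]_(1, 3) :=
  W2 *m map_mx (act sp sm) (W1 *m Xdata + b1 *m (const_mx 1 : 'M[R]_(1, 3)))
  + b2 *: (const_mx 1 : 'M[R]_(1, 3)).

Definition frob2 (m n : nat) (A : 'M[R]_(m, n)) : R :=
  \sum_(i < m) \sum_(j < n) (A i j) ^+ 2.

Definition loss (sp sm : R) (W1 : 'M[R]_(2, 2)) (b1 : 'cV[R]_2)
  (W2 : 'M[R]_(1, 2)) (b2 : R) : R :=
  2^-1 * frob2 (net sp sm W1 b1 W2 b2 - Ydata).

Definition is_local_min_loss (sp sm : R) (W1 : 'M[R]_(2, 2)) (b1 : 'cV[R]_2)
  (W2 : 'M[R]_(1, 2)) (b2 : R) : Prop :=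
  exists2 e : R, 0 < e &
    forall (V1 : 'M[R]_(2, 2)) (c1 : 'cV[R]_2) (V2 : 'M[R]_(1, 2)) (c2 : R),
      (forall i j, `|V1 i j - W1 i j| < e) ->
      (forall i j, `|c1 i j - b1 i j| < e) ->
      (forall i j, `|V2 i j - W2 i j| < e) ->
      `|c2 - b2| < e ->
      loss sp sm W1 b1 W2 b2 <= loss sp sm V1 c1 V2 c2.

End Defs.

From mathcomp Require Import all_boot all_order all_algebra.
From mathcomp Require Import reals ring lra.
Import Order.TTheory GRing.Theory Num.Theory.
Local Open Scope ring_scope.
Set Implicit Arguments. Unset Strict Implicit. Unset Printing Implicit Defensive.

(* Zero loss: for s_- > 0 take two hidden units whose activations
   h(s_-) = s_+ s_- and h(-s_+) = -s_- s_+ cancel on the first two data points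
   but not at the third; for s_- = 0 use instead that h vanishes on
   nonpositive inputs.

   Least squares: with W1 the all-ones matrix every hidden unit works in the
   linear regime s_+ x of h on the data, and this persists for all nearby
   parameters.  There the network is affine in its input, so its output at
   x_3 = (x_1 + x_2)/2 is the mean of its outputs at x_1 and x_2; any outputs
   (p, q, (p + q)/2) have loss at least 1/3 against Y = (0, 0, 1), which is the
   linear least-squares value. *)

Lemma sum_ord2 (V : zmodType) (F : 'I_2 -> V) : \sum_i F i = F 0 + F 1.
Proof. by rewrite big_ord_recr big_ord1; congr (F _ + F _); apply: val_inj. Qed.

Lemma sum_ord3 (V : zmodType) (F : 'I_3 -> V) : \sum_i F i = F 0 + F 1 + F 2.
Proof.
by rewrite 2!big_ord_recr big_ord1; congr (F _ + F _ + F _); apply: val_inj.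
Qed.

Section Activation.
Variables (R : realType) (sp sm : R).

Lemma ger0_act z : 0 <= sp -> 0 <= sm -> 0 <= z -> act sp sm z = sp * z.
Proof. by move=> sp_ge0 sm_ge0 z_ge0; rewrite /act max_l ?min_r ?mulr_ge0 ?addr0. Qed.

Lemma ler0_act z : 0 <= sp -> 0 <= sm -> z <= 0 -> act sp sm z = sm * z.
Proof.
by move=> sp_ge0 sm_ge0 z_le0; rewrite /act max_r ?min_l ?mulr_ge0_le0 ?add0r.
Qed.

Lemma act_eq0 z : 0 < sp -> 0 < sm -> (act sp sm z == 0) = (z == 0).
Proof.
move=> sp_gt0 sm_gt0; have [sp_ge0 sm_ge0] := (ltW sp_gt0, ltW sm_gt0).
have [z_ge0 | /ltW z_le0] := leP 0 z.
  by rewrite ger0_act // mulf_eq0 gt_eqF.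
by rewrite ler0_act // mulf_eq0 gt_eqF.
Qed.

Lemma map_act_ge0 m n (A : 'M[R]_(m, n)) : 0 <= sp -> 0 <= sm ->
  (forall i j, 0 <= A i j) -> map_mx (act sp sm) A = sp *: A.
Proof. by move=> sp_ge0 sm_ge0 A_ge0; apply/matrixP => i j; rewrite !mxE ger0_act. Qed.

End Activation.

Definition hidden (R : realType) (W1 : 'M[R]_2) (b1 : 'cV[R]_2) (x : 'cV[R]_2) :
  'cV[R]_2 := W1 *m x + b1.

Lemma hiddenE (R : realType) (W1 : 'M[R]_2) b1 x i :
  hidden W1 b1 x i 0 = W1 i 0 * x 0 0 + W1 i 1 * x 1 0 + b1 i 0.
Proof. by rewrite !mxE sum_ord2. Qed.

Lemma hidden_midpoint (R : realType) (W1 : 'M[R]_2) b1 x y :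
  hidden W1 b1 (2^-1 *: (x + y)) = 2^-1 *: (hidden W1 b1 x + hidden W1 b1 y).
Proof.
rewrite /hidden -scalemxAr mulmxDr; apply/matrixP => i j; rewrite !mxE.
by field.
Qed.

Section Network.
Variables (R : realType) (sp sm : R).

Definition net_at (W1 : 'M[R]_2) (b1 : 'cV[R]_2) (W2 : 'rV[R]_2) (b2 : R)
    (x : 'cV[R]_2) : R :=
  (W2 *m map_mx (act sp sm) (hidden W1 b1 x)) 0 0 + b2.

Lemma net_col W1 b1 W2 b2 (j : 'I_3) :
  net sp sm W1 b1 W2 b2 0 j = net_at W1 b1 W2 b2 (col j (Xdata R)).
Proof.
rewrite /net /net_at /hidden !mxE mulr1; congr (_ + _).
apply: eq_bigr => i _; rewrite !mxE; congr (_ * act _ _ (_ + _)).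
  by apply: eq_bigr => k _; rewrite !mxE.
by rewrite big_ord1 !mxE mulr1.
Qed.

Lemma net_atE W1 b1 W2 b2 x : net_at W1 b1 W2 b2 x =
  W2 0 0 * act sp sm (hidden W1 b1 x 0 0) + W2 0 1 * act sp sm (hidden W1 b1 x 1 0) + b2.
Proof. by rewrite /net_at mxE sum_ord2 !mxE. Qed.

Lemma net_at_midpoint W1 b1 W2 b2 x y : 0 <= sp -> 0 <= sm ->
  (forall i j, 0 <= hidden W1 b1 x i j) -> (forall i j, 0 <= hidden W1 b1 y i j) ->
  net_at W1 b1 W2 b2 (2^-1 *: (x + y)) =
  2^-1 * (net_at W1 b1 W2 b2 x + net_at W1 b1 W2 b2 y).
Proof.
move=> sp_ge0 sm_ge0 hx_ge0 hy_ge0.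
have hmid_ge0 i j : 0 <= (2^-1 *: (hidden W1 b1 x + hidden W1 b1 y)) i j.
  by rewrite 2!mxE mulr_ge0 ?addr_ge0 ?invr_ge0.
rewrite /net_at hidden_midpoint !map_act_ge0 // !scalerA -!scalemxAr mulmxDr !mxE.
by field.
Qed.

Lemma lossE W1 b1 W2 b2 : let N := net sp sm W1 b1 W2 b2 in
  loss sp sm W1 b1 W2 b2 = 2^-1 * (N 0 0 ^+ 2 + N 0 1 ^+ 2 + (N 0 2 - 1) ^+ 2).
Proof. by move=> N; rewrite /loss /frob2 big_ord1 sum_ord3 !mxE /= !subr0. Qed.

Lemma loss_eq0 W1 b1 W2 b2 :
  net sp sm W1 b1 W2 b2 = Ydata R -> loss sp sm W1 b1 W2 b2 = 0.
Proof. by move=> netY; rewrite lossE netY !mxE /= subrr expr0n /= !addr0 mulr0. Qed.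

End Network.

Lemma Xdata_col2 (R : realType) :
  col 2 (Xdata R) = 2^-1 *: (col 0 (Xdata R) + col 1 (Xdata R)).
Proof.
apply/matrixP => i j; rewrite !mxE /=.
by case: i => [[|[|//]] ?] /=; rewrite ?addr0 ?add0r mulr1.
Qed.

Lemma hidden_ones_col (R : realType) (j : 'I_3) :
  hidden (const_mx 1) 0 (col j (Xdata R)) = const_mx 1.
Proof.
apply/matrixP => i k; rewrite ord1 hiddenE !mxE /=.
by case: j => [[|[|[|//]]] ?] /=; rewrite ?mulr0 ?mulr1 ?addr0 ?add0r //; field.
Qed.

Lemma midpoint_sq_residual_ge (R : realFieldType) (p q : R) :
  3^-1 <= 2^-1 * (p ^+ 2 + q ^+ 2 + (2^-1 * (p + q) - 1) ^+ 2).
Proof.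
rewrite -subr_ge0.
have -> : 2^-1 * (p ^+ 2 + q ^+ 2 + (2^-1 * (p + q) - 1) ^+ 2) - 3^-1 =
    2^-1 * ((p - 3^-1) ^+ 2 + (q - 3^-1) ^+ 2 + 4^-1 * (p + q - 2 * 3^-1) ^+ 2).
  by field.
apply: mulr_ge0; first lra.
by rewrite !addr_ge0 ?sqr_ge0 // mulr_ge0 ?sqr_ge0 ?invr_ge0 ?ler0n.
Qed.

Section LeastSquares.
Variables (R : realType) (sp sm : R).
Hypotheses (sp_ge0 : 0 <= sp) (sm_ge0 : 0 <= sm).

Lemma third_le_loss_active W1 b1 W2 b2 :
  (forall i j, 0 <= hidden W1 b1 (col 0 (Xdata R)) i j) ->
  (forall i j, 0 <= hidden W1 b1 (col 1 (Xdata R)) i j) ->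
  3^-1 <= loss sp sm W1 b1 W2 b2.
Proof.
move=> h0_ge0 h1_ge0.
by rewrite lossE !net_col Xdata_col2 net_at_midpoint // midpoint_sq_residual_ge.
Qed.

Lemma third_le_loss_near (V1 : 'M[R]_2) (c1 : 'cV[R]_2) (V2 : 'rV[R]_2) (c2 : R) :
  (forall i j, `|V1 i j - 1| < 4^-1) -> (forall i j, `|c1 i j| < 4^-1) ->
  3^-1 <= loss sp sm V1 c1 V2 c2.
Proof.
move=> V1_near c1_near; apply: third_le_loss_active => i j;
  rewrite ord1 hiddenE !mxE /=;
  have := V1_near i 0; have := V1_near i 1; have := c1_near i 0;
  rewrite !ltr_distl ltr_norml; lra.
Qed.

End LeastSquares.

Lemma net_lsq (R : realType) (sp sm : R) : 0 < sp -> 0 <= sm ->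
  net sp sm (const_mx 1) 0 (const_mx (6 * sp)^-1) 0 = const_mx 3^-1.
Proof.
move=> sp_gt0 sm_ge0; apply/matrixP => i j.
rewrite ord1 net_col net_atE hidden_ones_col !mxE ger0_act ?(ltW sp_gt0) //.
by field; rewrite gt_eqF.
Qed.

Section Interpolation.
Variables (R : realType) (sp : R).
Hypothesis sp_gt0 : 0 < sp.

Lemma interpolation_sm0 : exists W1 W2, net sp 0 W1 0 W2 0 = Ydata R.
Proof.
exists (\matrix_(i, j) if j == 0 :> nat then 1 else if i == 0 :> nat then -1 else 0).
exists (\row_j (if j == 0 :> nat then - (2 / sp) else 2 / sp)).
apply/matrixP => i j; rewrite ord1 net_col net_atE !hiddenE !mxE /=.
have sp_ge0 := ltW sp_gt0.
case: j => [[|[|[|//]]] ?] /=; rewrite !(mulr0, mulr1, mul1r, addr0, add0r).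
- by rewrite mulNr addNr.
- by rewrite !ler0_act ?lerN10 // !mul0r !mulr0 addr0.
rewrite mulN1r addrN ler0_act // ger0_act //; last lra.
by field; rewrite gt_eqF.
Qed.

Lemma interpolation_sm_gt0 (sm : R) : 0 < sm -> sp != sm ->
  exists W1 W2, net sp sm W1 0 W2 0 = Ydata R.
Proof.
move=> sm_gt0 sp_neq_sm; have [sp_ge0 sm_ge0] := (ltW sp_gt0, ltW sm_gt0).
set a := act sp sm ((sm - sp) / 2).
have a_neq0 : a != 0.
  by rewrite act_eq0 // mulf_eq0 subr_eq0 eq_sym (negbTE sp_neq_sm) invr_eq0 pnatr_eq0.
exists (\matrix_(i, j) if i == j :> nat then sm else - sp), (const_mx (2 * a)^-1).
have act_cancel : act sp sm sm + act sp sm (- sp) = 0.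
  by rewrite ger0_act // ler0_act ?oppr_le0 // mulrN mulrC subrr.
apply/matrixP => i j; rewrite ord1 net_col net_atE !hiddenE !mxE /=.
case: j => [[|[|[|//]]] ?] /=; rewrite !(mulr0, mulr1, addr0, add0r).
- by rewrite -mulrDr act_cancel mulr0.
- by rewrite -mulrDr addrC act_cancel mulr0.
have -> : - sp / 2 + sm / 2 = (sm - sp) / 2 by ring.
have -> : sm / 2 + - sp / 2 = (sm - sp) / 2 by ring.
by rewrite -/a; field.
Qed.

End Interpolation.

Theorem mainTheorem4 (R : realType) (sp sm : R) :
  0 < sp -> 0 <= sm -> sp != sm ->
  (exists (W1 : 'M[R]_(2, 2)) (W2 : 'M[R]_(1, 2)),
      loss sp sm W1 0 W2 0 = 0) /\
  (exists (W1 : 'M[R]_(2, 2)) (W2 : 'M[R]_(1, 2)),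
      [/\ net sp sm W1 0 W2 0 = const_mx (3^-1),
          loss sp sm W1 0 W2 0 = 3^-1
        & is_local_min_loss sp sm W1 0 W2 0]).
Proof.
move=> sp_gt0 sm_ge0 sp_neq_sm; split.
  suff [W1 [W2 netY]] : exists W1 W2, net sp sm W1 0 W2 0 = Ydata R.
    by exists W1, W2; apply: loss_eq0.
  move: sm_ge0 sp_neq_sm; rewrite le_eqVlt => /predU1P[<- _ | sm_gt0 sp_neq_sm].
    exact: interpolation_sm0.
  exact: interpolation_sm_gt0.
have net_third := net_lsq sp_gt0 sm_ge0.
have loss_third : loss sp sm (const_mx 1) 0 (const_mx (6 * sp)^-1) 0 = 3^-1.
  by rewrite lossE net_third !mxE; field.
exists (const_mx 1), (const_mx (6 * sp)^-1); split => //.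
exists 4^-1; first by rewrite invr_gt0 ltr0n.
move=> V1 c1 V2 c2 V1_near c1_near _ _; rewrite loss_third.
apply: (third_le_loss_near (ltW sp_gt0) sm_ge0) => i j.
  by move: (V1_near i j); rewrite mxE.
by move: (c1_near i j); rewrite mxE subr0.
Qed.
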